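(* Let $M(C,\bar\xi,\pi)$ be a Myller configuration with Darboux frame $(\bar\xi,\bar\mu,\bar v)$ and invariants $G,K,T$ such that $(G(s),K(s))\neq(0,0)$ for all $s$, and suppose $C$ is a $\bar\xi$-helix in $M$ with fixed unit axis $\bar d_\xi$ and constant angle $\theta$, $\langle\bar\xi,\bar d_\xi\rangle=\cos\theta$. Then, for one choice of sign $\epsilon\in\{1,-1\}$, $$\bar d_\xi=(\cos\theta)\bar\xi-\epsilon\sin\theta\frac{K}{\sqrt{G^2+K^2}}\bar\mu+\epsilon\sin\theta\frac{G}{\sqrt{G^2+K^2}}\bar v .$$
   Context: Let $C$ be a smooth curve in Euclidean 3-space $E^3$ parametrized by arclength $s$; primes denote $d/ds$. A Myller configuration $M(C,\bar\xi,\pi)$ consists of a smooth unit vector field $\bar\xi(s)$ along $C$ and a smooth field of oriented planes $\pi(s)$ with $\bar\xi(s)\in\pi(s)$. Let $\bar v(s)$ be the unit normal of $\pi(s)$ and $\bar\mu=\bar v\times\bar\xi$. The Darboux frame $(\bar\xi,\bar\mu,\bar v)$ is positively oriented orthonormal with $\bar\xi'=G\bar\mu+K\bar v$, $\bar\mu'=-G\bar\xi+T\bar v$, $\bar v'=-K\bar\xi-T\bar\mu$ ($G,K,T$: geodesic curvature, normal curvature, geodesic torsion). $C$ is a $\bar\xi$-helix in $M$ if there are a constant unit vector $\bar d_\xi$ (the axis) and a constant $\theta$ with $\langle\bar\xi,\bar d_\xi\rangle=\cos\theta$ along $C$. *)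

From Stdlib Require Import Reals.
From Coquelicot Require Import Coquelicot.
Open Scope R_scope.

Record vec3 := V3 { vx : R ; vy : R ; vz : R }.

Definition vadd (u w : vec3) : vec3 := V3 (vx u + vx w) (vy u + vy w) (vz u + vz w).
Definition vscal (c : R) (u : vec3) : vec3 := V3 (c * vx u) (c * vy u) (c * vz u).
Definition dot (u w : vec3) : R := vx u * vx w + vy u * vy w + vz u * vz w.
Definition cross (u w : vec3) : vec3 :=
  V3 (vy u * vz w - vz u * vy w) (vz u * vx w - vx u * vz w) (vx u * vy w - vy u * vx w).

Definition smooth_on (a b : R) (f : R -> R) : Prop :=
  forall (n : nat) (s : R), a < s < b -> ex_derive (Derive_n f n) s.

Definition vsmooth_on (a b : R) (f : R -> vec3) : Prop :=
  smooth_on a b (fun t => vx (f t)) /\ smooth_on a b (fun t => vy (f t)) /\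
  smooth_on a b (fun t => vz (f t)).

Definition vis_derive (f : R -> vec3) (s : R) (df : vec3) : Prop :=
  is_derive (fun t => vx (f t)) s (vx df) /\ is_derive (fun t => vy (f t)) s (vy df) /\
  is_derive (fun t => vz (f t)) s (vz df).

(* Darboux frame (xi, mu, nu) of a Myller configuration along a curve
   parametrized by arclength s in (a,b), with invariants G, K, T. *)
Definition darboux_frame (a b : R) (xi mu nu : R -> vec3) (G K T : R -> R) : Prop :=
  vsmooth_on a b xi /\ vsmooth_on a b mu /\ vsmooth_on a b nu /\
  smooth_on a b G /\ smooth_on a b K /\ smooth_on a b T /\
  (forall s, a < s < b ->
     dot (xi s) (xi s) = 1 /\ dot (nu s) (nu s) = 1 /\ dot (xi s) (nu s) = 0 /\
     mu s = cross (nu s) (xi s)) /\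
  (forall s, a < s < b ->
     vis_derive xi s (vadd (vscal (G s) (mu s)) (vscal (K s) (nu s))) /\
     vis_derive mu s (vadd (vscal (- G s) (xi s)) (vscal (T s) (nu s))) /\
     vis_derive nu s (vadd (vscal (- K s) (xi s)) (vscal (- T s) (mu s)))).

Definition xi_helix (a b : R) (xi : R -> vec3) (d : vec3) (theta : R) : Prop :=
  dot d d = 1 /\ forall s, a < s < b -> dot (xi s) d = cos theta.

From Stdlib Require Import Reals Lra Psatz.
From Coquelicot Require Import Coquelicot.
Open Scope R_scope.

(* Expanding the axis in the Darboux frame gives d = cos(theta) xi + alpha mu + beta nu
   with alpha^2 + beta^2 = sin^2(theta).  Differentiating <xi, d> = cos(theta) gives
   G alpha + K beta = 0, so (alpha, beta) is a multiple of (-K, G) / sqrt(G^2 + K^2),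
   the multiple being +-sin(theta).  The sign cannot jump: the continuous function
   -K alpha + G beta = +-sin(theta) sqrt(G^2 + K^2) vanishes nowhere unless sin(theta) = 0. *)

Lemma vec3_ext (u w : vec3) : vx u = vx w -> vy u = vy w -> vz u = vz w -> u = w.
Proof. destruct u, w; simpl; intros; subst; reflexivity. Qed.

Lemma vscal_1 (u : vec3) : vscal 1 u = u.
Proof. destruct u; apply vec3_ext; simpl; ring. Qed.

Lemma dot_comm (u w : vec3) : dot u w = dot w u.
Proof. destruct u, w; unfold dot; simpl; ring. Qed.

Lemma dot_lincomb2_l (p q : R) (x y w : vec3) :
  dot (vadd (vscal p x) (vscal q y)) w = p * dot x w + q * dot y w.
Proof. destruct x, y, w; unfold dot; simpl; ring. Qed.

Lemma dot_lincomb3_r (p q r : R) (w x y z : vec3) :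
  dot w (vadd (vadd (vscal p x) (vscal q y)) (vscal r z)) =
  p * dot w x + q * dot w y + r * dot w z.
Proof. destruct w, x, y, z; unfold dot; simpl; ring. Qed.

(* Cramer's rule for the basis (a, b, b x a), whose determinant is |a|^2 |b|^2 - <a,b>^2. *)
Lemma cross_basis_decomposition (a b d : vec3) :
  vscal (dot a a * dot b b - dot a b ^ 2) d =
  vadd (vadd (vscal (dot a d * dot b b - dot b d * dot a b) a)
             (vscal (dot (cross b a) d) (cross b a)))
       (vscal (dot b d * dot a a - dot a d * dot a b) b).
Proof. destruct a, b, d; apply vec3_ext; unfold dot; simpl; ring. Qed.

Lemma orthonormal_decomposition (a b d : vec3) :
  dot a a = 1 -> dot b b = 1 -> dot a b = 0 ->
  d = vadd (vadd (vscal (dot a d) a) (vscal (dot (cross b a) d) (cross b a)))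
           (vscal (dot b d) b).
Proof.
  intros Haa Hbb Hab.
  pose proof (cross_basis_decomposition a b d) as E.
  rewrite Haa, Hbb, Hab in E.
  replace (1 * 1 - 0 ^ 2) with 1 in E by ring.
  replace (dot a d * 1 - dot b d * 0) with (dot a d) in E by ring.
  replace (dot b d * 1 - dot a d * 0) with (dot b d) in E by ring.
  rewrite vscal_1 in E. exact E.
Qed.

Lemma is_derive_continuity_pt (u : R -> R) (s l : R) :
  is_derive u s l -> continuity_pt u s.
Proof.
  intro Hd. apply continuity_pt_filterlim.
  apply (ex_derive_continuous (K := R_AbsRing) (V := R_NormedModule)).
  exists l. exact Hd.
Qed.

Lemma smooth_on_continuity_pt (a b : R) (u : R -> R) (s : R) :
  smooth_on a b u -> a < s < b -> continuity_pt u s.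
Proof.
  intros Hu Hs. destruct (Hu 0%nat s Hs) as [l Hl].
  exact (is_derive_continuity_pt _ _ _ Hl).
Qed.

Lemma vis_derive_dot_l (f : R -> vec3) (s : R) (df w : vec3) :
  vis_derive f s df -> is_derive (fun t => dot (f t) w) s (dot df w).
Proof.
  intros [Hx [Hy Hz]]. unfold dot.
  repeat apply @is_derive_plus; apply (@is_derive_scal_l R_AbsRing R_NormedModule); assumption.
Qed.

Lemma is_derive_const_on (a b c s l : R) (u : R -> R) :
  a < s < b -> (forall t, a < t < b -> u t = c) -> is_derive u s l -> l = 0.
Proof.
  intros Hs Hc Hd.
  assert (Hconst : is_derive (fun _ => c) s l).
  { apply (is_derive_ext_loc u); [|exact Hd].
    apply (filter_imp (fun t => a < t /\ t < b)); [exact Hc|].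
    apply (open_and _ _ (open_gt a) (open_lt b)). exact Hs. }
  apply is_derive_unique in Hconst. rewrite Derive_const in Hconst. auto.
Qed.

Lemma continuity_nonzero_same_sign_segment (f : R -> R) (x y : R) :
  x < y -> (forall z, x <= z <= y -> continuity_pt f z) ->
  (forall z, x <= z <= y -> f z <> 0) -> 0 < f x * f y.
Proof.
  intros Hxy Hc Hn.
  assert (Hx : f x <> 0) by (apply Hn; lra).
  assert (Hy : f y <> 0) by (apply Hn; lra).
  destruct (Rlt_or_le (f x) 0) as [Hx0|Hx0]; destruct (Rlt_or_le (f y) 0) as [Hy0|Hy0].
  - nra.
  - destruct (Ranalysis5.IVT_interv f x y Hc Hxy Hx0 ltac:(lra)) as [z [Hz Hfz]].
    destruct (Hn z Hz Hfz).
  - destruct (Ranalysis5.IVT_interv (fun t => - f t) x y) as [z [Hz Hfz]];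
      [intros z Hz; apply continuity_pt_opp, Hc, Hz | exact Hxy | lra | lra |].
    destruct (Hn z Hz). lra.
  - assert (0 < f x) by lra. assert (0 < f y) by lra. nra.
Qed.

Lemma continuity_nonzero_same_sign (f : R -> R) (a b x y : R) :
  a < x < b -> a < y < b -> (forall z, a < z < b -> continuity_pt f z) ->
  (forall z, a < z < b -> f z <> 0) -> 0 < f x * f y.
Proof.
  intros Hx Hy Hc Hn.
  destruct (Rtotal_order x y) as [Hxy|[<-|Hxy]].
  - apply continuity_nonzero_same_sign_segment; auto;
      intros z Hz; [apply Hc|apply Hn]; lra.
  - pose proof (Hn x Hx). apply Rsqr_pos_lt. assumption.
  - rewrite Rmult_comm. apply continuity_nonzero_same_sign_segment; auto;
      intros z Hz; [apply Hc|apply Hn]; lra.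
Qed.

Lemma continuity_sqr_eq_sign (a b c : R) (f g : R -> R) :
  a < b -> (forall z, a < z < b -> continuity_pt f z) ->
  (forall z, a < z < b -> 0 < g z) ->
  (forall z, a < z < b -> f z ^ 2 = (c * g z) ^ 2) ->
  exists eps, (eps = 1 \/ eps = -1) /\ forall z, a < z < b -> f z = eps * c * g z.
Proof.
  intros Hab Hc Hg Hsq.
  assert (Hroots : forall z, a < z < b -> f z = c * g z \/ f z = - (c * g z)).
  { intros z Hz. apply Rsqr_eq. unfold Rsqr. pose proof (Hsq z Hz). nra. }
  destruct (Req_dec c 0) as [->|Hc0].
  { exists 1. split; [left; reflexivity|]. intros z Hz.
    destruct (Hroots z Hz) as [->| ->]; ring. }
  set (m := (a + b) / 2).
  assert (Hm : a < m < b) by (unfold m; lra).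
  assert (Hnz : forall z, a < z < b -> f z <> 0).
  { intros z Hz Hfz. pose proof (Hg z Hz).
    destruct (Hroots z Hz) as [E|E]; rewrite Hfz in E; nra. }
  assert (Hcc : 0 < c * c) by (apply Rsqr_pos_lt; exact Hc0).
  (* The sign of f / c at the midpoint; nonvanishing of f propagates it everywhere. *)
  exists (if Rlt_dec 0 (f m * c) then 1 else -1).
  split; [destruct Rlt_dec; auto|].
  intros z Hz.
  pose proof (continuity_nonzero_same_sign f a b z m Hz Hm Hc Hnz) as Hzm.
  pose proof (Hg z Hz). pose proof (Hg m Hm).
  assert (0 < c * c * g m) by nra.
  destruct (Hroots z Hz) as [Ez|Ez]; destruct (Hroots m Hm) as [Em|Em];
    rewrite Ez in Hzm |- *; rewrite Em in Hzm |- *; destruct Rlt_dec; nra.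
Qed.

Lemma orthogonal_sqr (G K al be : R) :
  G * al + K * be = 0 -> (- K * al + G * be) ^ 2 = (G ^ 2 + K ^ 2) * (al ^ 2 + be ^ 2).
Proof. intro H. nra. Qed.

Lemma orthogonal_coords (G K al be N c : R) :
  0 < N -> N * N = G ^ 2 + K ^ 2 -> G * al + K * be = 0 -> - K * al + G * be = c * N ->
  al = - c * (K / N) /\ be = c * (G / N).
Proof.
  intros HN HNN Horth Hcross.
  assert (Hal : al * N = - c * K).
  { apply (Rmult_eq_reg_r N); [|lra].
    transitivity ((G ^ 2 + K ^ 2) * al); [rewrite <- HNN; ring|].
    transitivity (G * (G * al + K * be) - K * (- K * al + G * be)); [ring|].
    rewrite Horth, Hcross. ring. }
  assert (Hbe : be * N = c * G).
  { apply (Rmult_eq_reg_r N); [|lra].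
    transitivity ((G ^ 2 + K ^ 2) * be); [rewrite <- HNN; ring|].
    transitivity (K * (G * al + K * be) + G * (- K * al + G * be)); [ring|].
    rewrite Horth, Hcross. ring. }
  split; apply (Rmult_eq_reg_r N); try lra; [rewrite Hal | rewrite Hbe]; field; lra.
Qed.

Section HelixAxis.

Variables (a b : R) (xi mu nu : R -> vec3) (G K T : R -> R) (d : vec3) (theta : R).
Hypothesis frame : darboux_frame a b xi mu nu G K T.
Hypothesis helix : xi_helix a b xi d theta.

Lemma helix_axis_decomposition (s : R) : a < s < b ->
  d = vadd (vadd (vscal (cos theta) (xi s)) (vscal (dot (mu s) d) (mu s)))
           (vscal (dot (nu s) d) (nu s)).
Proof.
  intros Hs. destruct frame as [_ [_ [_ [_ [_ [_ [Hon _]]]]]]].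
  destruct (Hon s Hs) as [Hxx [Hnn [Hxn Hmu]]].
  destruct helix as [_ Hangle].
  rewrite (orthonormal_decomposition (xi s) (nu s) d Hxx Hnn Hxn) at 1.
  rewrite <- Hmu, Hangle by exact Hs. reflexivity.
Qed.

Lemma helix_axis_coords_sqr (s : R) : a < s < b ->
  dot (mu s) d ^ 2 + dot (nu s) d ^ 2 = sin theta ^ 2.
Proof.
  intros Hs. destruct helix as [Hdd Hangle].
  rewrite (helix_axis_decomposition s Hs) in Hdd at 2.
  rewrite dot_lincomb3_r, !(dot_comm d), Hangle in Hdd by exact Hs.
  pose proof (sin2_cos2 theta) as Hsc. unfold Rsqr in Hsc. nra.
Qed.

Lemma helix_axis_orthogonal (s : R) : a < s < b ->
  G s * dot (mu s) d + K s * dot (nu s) d = 0.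
Proof.
  intros Hs. destruct frame as [_ [_ [_ [_ [_ [_ [_ Hder]]]]]]].
  destruct (Hder s Hs) as [Dxi _].
  rewrite <- dot_lincomb2_l.
  destruct helix as [_ Hangle].
  exact (is_derive_const_on a b (cos theta) s _ _ Hs Hangle (vis_derive_dot_l _ _ _ d Dxi)).
Qed.

Lemma helix_axis_cross_continuity (s : R) : a < s < b ->
  continuity_pt (fun t => - K t * dot (mu t) d + G t * dot (nu t) d) s.
Proof.
  intros Hs. destruct frame as [_ [_ [_ [SG [SK [_ [_ Hder]]]]]]].
  destruct (Hder s Hs) as [_ [Dmu Dnu]].
  apply continuity_pt_plus; apply continuity_pt_mult.
  - apply continuity_pt_opp. exact (smooth_on_continuity_pt a b K s SK Hs).
  - exact (is_derive_continuity_pt _ _ _ (vis_derive_dot_l _ _ _ d Dmu)).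
  - exact (smooth_on_continuity_pt a b G s SG Hs).
  - exact (is_derive_continuity_pt _ _ _ (vis_derive_dot_l _ _ _ d Dnu)).
Qed.

End HelixAxis.

Theorem corollary7 (a b : R) (xi mu nu : R -> vec3) (G K T : R -> R)
  (d : vec3) (theta : R) :
  a < b ->
  darboux_frame a b xi mu nu G K T ->
  (forall s, a < s < b -> ~ (G s = 0 /\ K s = 0)) ->
  xi_helix a b xi d theta ->
  exists eps : R, (eps = 1 \/ eps = -1) /\
    forall s, a < s < b ->
      d = vadd (vadd (vscal (cos theta) (xi s))
                     (vscal (- eps * sin theta * (K s / sqrt (G s ^ 2 + K s ^ 2))) (mu s)))
               (vscal (eps * sin theta * (G s / sqrt (G s ^ 2 + K s ^ 2))) (nu s)).
Proof.
  intros Hab frame Hnz helix.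
  pose proof (helix_axis_decomposition _ _ _ _ _ _ _ _ _ _ frame helix) as Hdecomp.
  pose proof (helix_axis_coords_sqr _ _ _ _ _ _ _ _ _ _ frame helix) as Hunit.
  pose proof (helix_axis_orthogonal _ _ _ _ _ _ _ _ _ _ frame helix) as Horth.
  pose proof (helix_axis_cross_continuity _ _ _ _ _ _ _ _ d frame) as Hcont.
  set (N := fun s => sqrt (G s ^ 2 + K s ^ 2)).
  assert (HNN : forall s, a < s < b -> N s * N s = G s ^ 2 + K s ^ 2)
    by (intros s _; apply sqrt_sqrt; nra).
  assert (HN : forall s, a < s < b -> 0 < N s).
  { intros s Hs. apply sqrt_lt_R0. pose proof (Hnz s Hs).
    destruct (Req_dec (G s) 0); [destruct (Req_dec (K s) 0)|]; [tauto|nra..]. }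
  destruct (continuity_sqr_eq_sign a b (sin theta) _ N Hab Hcont HN) as [eps [Heps Hcross]].
  { intros s Hs.
    rewrite orthogonal_sqr, Hunit, Rpow_mult_distr, <- (HNN s Hs) by auto.
    ring. }
  exists eps. split; [exact Heps|]. intros s Hs.
  destruct (orthogonal_coords _ _ _ _ _ (eps * sin theta) (HN s Hs) (HNN s Hs) (Horth s Hs)
              (Hcross s Hs)) as [Hal Hbe].
  rewrite (Hdecomp s Hs) at 1. rewrite Hal, Hbe.
  replace (- (eps * sin theta)) with (- eps * sin theta) by ring. reflexivity.
Qed.
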